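(* Let $t$ be a positive integer and let $G$ be a graph with no odd $K_t$ minor. Then $$\chi(G) \le 2t\left(1+\log\left(\frac{|V(G)|}{t}\right)\right).$$
   Context: Graphs are finite and simple; $\chi$ is the chromatic number; $\log$ is the natural logarithm. A graph $G$ has an odd $K_t$ minor if a graph isomorphic to $K_t$ (complete graph on $t$ vertices) can be obtained from a subgraph $G'$ of $G$ by contracting a set of edges forming a cut in $G'$ (the empty set is a cut). *)

From mathcomp Require Import all_boot.
From Stdlib Require Import Reals.

Set Implicit Arguments.
Unset Strict Implicit.
Unset Printing Implicit Defensive.

Section Graphs.
Variable T : finType.

(* A (finite simple) graph on T is an adjacency relation e : rel T that is
   symmetric and irreflexive; these hypotheses appear in the theorem. *)

Definition proper_coloring (e : rel T) (k : nat) (c : {ffun T -> 'I_k}) : bool :=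
  [forall x, forall y, e x y ==> (c x != c y)].

Definition colorable (e : rel T) (k : nat) : bool :=
  [exists c : {ffun T -> 'I_k}, proper_coloring e c].

(* chi(G): the least k such that G is k-colourable (for loopless graphs
   #|T| colours always suffice, so the minimum is over k <= #|T|). *)
Definition chromatic_number (e : rel T) : nat :=
  \big[minn/#|T|]_(k < #|T|.+1 | colorable e k) (k : nat).

(* Odd K_t minor, literally as in the paper: there is a subgraph G' = (S, E')
   of G and a cut F of G' (the G'-edges between X and S \ X, for some X) such
   that contracting F yields a graph isomorphic to K_t.  The vertices of the
   contracted graph are the classes of S under connectivity by F-edges; phi
   identifies these classes with 'I_t (bijectively: phi is onto and
   phi x = phi y iff x, y are F-connected), and two distinct classes are
   adjacent iff some E'-edge joins them; isomorphism with K_t means every pair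
   of distinct classes is adjacent. *)
Definition has_odd_Kt_minor (e : rel T) (t : nat) : Prop :=
  exists (S : {set T}) (E' : rel T) (X : {set T}) (phi : T -> 'I_t),
    [/\ (forall x y, E' x y -> [/\ e x y, x \in S & y \in S]),
        symmetric E',
        let F := fun x y => E' x y && ((x \in X) != (y \in X)) in
        forall x y, x \in S -> y \in S ->
          (phi x == phi y) = connect F x y,
        (forall i : 'I_t, exists2 x, x \in S & phi x = i)
      & (forall i j : 'I_t, i != j ->
           exists x y, [/\ E' x y, phi x = i & phi y = j])].

End Graphs.

From mathcomp Require Import all_boot all_order zify.
From Stdlib Require Import Reals Lra.

(* A vertex set [U] spanning no odd K_t minor contains a stable set of size at
   least [|U| / 2t].  To find one, grow from a vertex a stable set [S] and a set
   [C] containing it, with [|C| < 2 |S|], connected by edges between [S] and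
   [C \ S], until the closed neighbourhood [K] of [S] in [U] is a union of
   components of [G[U]].  Every vertex of [K \ C] has a neighbour in [S], and
   the edges inside [C] all cross the cut [S]; so [C] can be contracted into a
   branch set adjacent to any odd minor in [K \ C], which therefore has no odd
   K_(t-1) minor.  By induction on [t], [K \ C] has a stable set of size
   [|K \ C| / 2(t-1)], and this set or [S] is large enough for [K]; induction
   on [|U|] takes care of [U \ K].
   Colouring such stable sets one at a time, removing [i >= m / 2t] of the [m]
   remaining vertices lowers [2t (1 + ln (m / t))] by [2t ln (m / (m - i))],
   which is at least [2t i / m >= 1]. *)

Definition log_bound (t n : nat) : R := (2 * INR t * (1 + ln (INR n / INR t)))%R.

Lemma ln_ge_1_sub_inv x : (0 < x -> 1 - / x <= ln x)%R.
Proof.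
move=> x0; have := exp_ineq1_le (- ln x).
by rewrite exp_Ropp exp_ln //; lra.
Qed.

Section LogBound.
Set Implicit Arguments.
Unset Strict Implicit.

Variable t : nat.
Hypothesis t_gt0 : 0 < t.

Lemma log_bound_ge n k : t <= n -> k <= 2 * t -> (INR k <= log_bound t n)%R.
Proof.
have /ltP/lt_0_INR t0 := t_gt0.
move=> /leP/le_INR tn /leP/le_INR; rewrite mult_INR /= => kt.
have q0 : (0 < INR n / INR t)%R by apply: Rdiv_lt_0_compat; lra.
have := ln_ge_1_sub_inv _ q0.
have -> : (/ (INR n / INR t) = INR t / INR n)%R by field; lra.
have : (INR t / INR n * INR n = INR t)%R by field; lra.
set q := (INR t / INR n)%R; have : (0 < q)%R by apply: Rdiv_lt_0_compat; lra.
rewrite /log_bound; nra.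
Qed.

Lemma log_bound_step m i : t <= m -> m + i <= 2 * t * i ->
  (log_bound t m + 1 <= log_bound t (m + i))%R.
Proof.
have /ltP/lt_0_INR t0 := t_gt0.
move=> /leP/le_INR tm /leP/le_INR; rewrite !mult_INR !plus_INR /= => hi.
have i0 := pos_INR i.
have growth : (INR m / INR t * ((INR m + INR i) / INR m) = (INR m + INR i) / INR t)%R.
  by field; lra.
have q0 : (0 < (INR m + INR i) / INR m)%R by apply: Rdiv_lt_0_compat; lra.
have := ln_ge_1_sub_inv _ q0.
have -> : (/ ((INR m + INR i) / INR m) = INR m / (INR m + INR i))%R by field; lra.
have : (INR m / (INR m + INR i) * (INR m + INR i) = INR m)%R by field; lra.
set q := (INR m / (INR m + INR i))%R => qE lnq.
have gain : (1 <= 2 * INR t * (1 - q))%R by nra.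
rewrite /log_bound plus_INR -growth ln_mult //; last by apply: Rdiv_lt_0_compat; lra.
nra.
Qed.

Lemma log_bound_succ k m i : k <= m -> (t <= m -> (INR k <= log_bound t m)%R) ->
  m + i <= 2 * t * i -> t <= m + i -> (INR k.+1 <= log_bound t (m + i))%R.
Proof.
move=> km hk hi tmi; case: (leqP t m) => tm.
  by rewrite S_INR; have := log_bound_step tm hi; have := hk tm; lra.
by apply: log_bound_ge => //; lia.
Qed.

End LogBound.

Section OddMinorFree.
Set Implicit Arguments.
Unset Strict Implicit.

Variables (T : finType) (e : rel T).
Hypotheses (esym : symmetric e) (eirr : irreflexive e).

Lemma connect_restrict (e1 e2 : rel T) (A : {pred T}) x y :
  closed e1 A -> (forall u w, u \in A -> e1 u w -> e2 u w) ->
  x \in A -> connect e1 x y -> connect e2 x y.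
Proof.
move=> clA sub12 + /connectP[p pth ->]; elim: p x pth => [|z p IHp] x /=.
  by rewrite connect0.
case/andP=> e1xz pth xA; have zA : z \in A by rewrite -(clA _ _ e1xz).
exact: connect_trans (connect1 (sub12 _ _ xA e1xz)) (IHp _ pth zA).
Qed.

Lemma sub_connect (e1 e2 : rel T) : subrel e1 e2 -> subrel (connect e1) (connect e2).
Proof. by move=> sub12; apply: connect_sub => x y /sub12/connect1. Qed.

Definition cut_edges (E : rel T) (X : {set T}) : rel T :=
  [rel x y | E x y && ((x \in X) != (y \in X))].

Definition odd_Kt_model t (S : {set T}) (E : rel T) (X : {set T}) (phi : T -> 'I_t) :=
  [/\ forall x y, E x y -> [/\ e x y, x \in S & y \in S],
      symmetric E,
      {in S &, forall x y, (phi x == phi y) = connect (cut_edges E X) x y},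
      forall i, exists2 x, x \in S & phi x = i
    & forall i j, i != j -> exists x y, [/\ E x y, phi x = i & phi y = j]].

Definition odd_minor_in (U : {set T}) t :=
  exists (S : {set T}) (E : rel T) (X : {set T}) (phi : T -> 'I_t),
    S \subset U /\ odd_Kt_model S E X phi.

Lemma has_odd_Kt_minor_in U t : odd_minor_in U t -> has_odd_Kt_minor e t.
Proof. by case=> S [E [X [phi [_ model]]]]; exists S, E, X, phi. Qed.

Lemma odd_minor_in_subset (U V : {set T}) t :
  U \subset V -> odd_minor_in U t -> odd_minor_in V t.
Proof.
move=> sUV [S [E [X [phi [sSU model]]]]].
by exists S, E, X, phi; split=> //; apply: subset_trans sUV.
Qed.

Lemma odd_minor_in1 (U : {set T}) v : v \in U -> odd_minor_in U 1.
Proof.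
move=> vU; exists [set v], [rel _ _ | false], set0, (fun=> ord0).
split; first by rewrite sub1set.
split=> //.
- by move=> x y /set1P-> /set1P->; rewrite eqxx connect0.
- by move=> i; exists v; rewrite ?set11 // [i]ord1.
- by move=> i j; rewrite [i]ord1 [j]ord1 eqxx.
Qed.

(* In an odd minor model some side of the cut [X] meets every branch set:
   if a branch set lies entirely outside [X], so do the endpoints of the
   edges reaching it from the other branch sets, since those edges are not
   contracted. *)
Lemma odd_Kt_model_side t S E X (phi : T -> 'I_t) : odd_Kt_model S E X phi ->
  exists b, forall i, exists2 x, x \in S & phi x = i /\ (x \in X) = b.
Proof.
case=> hE _ hphi honto hadj.
have [/existsP[i0 /forall_inP out0]|/existsPn allin] :=
  boolP [exists i, [forall x in S, (phi x == i) ==> (x \notin X)]].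
  have outX x : x \in S -> phi x = i0 -> x \notin X.
    by move=> xS px; have := out0 x xS; rewrite px eqxx.
  exists false => i; have [->|ne] := eqVneq i i0.
    by have [x xS px] := honto i0; exists x => //; split=> //; apply/negbTE/outX.
  have [x [y [Exy px py]]] := hadj i i0 ne; have [_ xS yS] := hE _ _ Exy.
  exists x => //; split=> //; apply/negbTE/negP => xX.
  have : connect (cut_edges E X) x y.
    by apply: connect1; rewrite /cut_edges /= Exy xX (outX y yS py).
  by rewrite -hphi // px py (negbTE ne).
exists true => i; have /forall_inPn[x xS] := allin i.
by rewrite negb_imply negbK => /andP[/eqP px xX]; exists x.
Qed.

Definition stable (I : {set T}) := {in I &, forall x y, ~~ e x y}.

Definition nbhd (U S : {set T}) := [set x in U | (x \in S) || [exists s in S, e x s]].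

Definition nbhd_closed (U S : {set T}) :=
  forall x y, x \in nbhd U S -> y \in U -> e x y -> y \in nbhd U S.

Lemma nbhd_sub (U S : {set T}) : nbhd U S \subset U.
Proof. by apply/subsetP=> x; rewrite inE => /andP[]. Qed.

Lemma nbhd_adj (U S : {set T}) x s : x \in U -> s \in S -> e x s -> x \in nbhd U S.
Proof.
by move=> xU sS exs; rewrite inE xU; apply/orP; right; apply/exists_inP; exists s.
Qed.

Lemma nbhdS (U S S' : {set T}) : S \subset S' -> nbhd U S \subset nbhd U S'.
Proof.
move=> sSS'; apply/subsetP=> x.
rewrite !inE => /andP[-> /orP[xS|/exists_inP[s sS exs]]].
  by rewrite (subsetP sSS' x xS).
by apply/orP; right; apply/exists_inP; exists s; rewrite ?(subsetP sSS').
Qed.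

Definition cluster_edges (C S : {set T}) : rel T :=
  [rel x y | [&& e x y, x \in C, y \in C & (x \in S) != (y \in S)]].

Lemma cluster_edges_sym (C S : {set T}) : symmetric (cluster_edges C S).
Proof.
by move=> x y; rewrite /cluster_edges /= esym (eq_sym (x \in S)) (andbCA (x \in C)).
Qed.

Record cluster (U : {set T}) (v : T) (C S : {set T}) : Prop := Cluster {
  cluster_sub : S \subset C;
  cluster_nbhd : C \subset nbhd U S;
  cluster_root : v \in S;
  cluster_stable : stable S;
  cluster_card : #|C| < 2 * #|S|;
  cluster_connect : {in C, forall x, connect (cluster_edges C S) v x}
}.

Lemma cluster1 (U : {set T}) v : v \in U -> cluster U v [set v] [set v].
Proof.
move=> vU; split; rewrite ?set11 ?cards1 //.
- by apply/subsetP=> x /set1P->; rewrite !inE vU eqxx.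
- by move=> x y /set1P-> /set1P->; rewrite eirr.
- by move=> x /set1P->; rewrite connect0.
Qed.

(* [S] gains one vertex and [C] at most two, so [#|C| < 2 * #|S|] persists. *)
Lemma cluster_grow (U : {set T}) v C S x y : cluster U v C S ->
  x \in nbhd U S -> y \in U :\: nbhd U S -> e x y ->
  cluster U v (x |: (y |: C)) (y |: S).
Proof.
case=> sSC sCN vS stS cardCS conC xN /setDP[yU yN] exy.
have yNS s : s \in S -> ~~ e y s.
  by move=> sS; apply: contra yN; apply: nbhd_adj yU sS.
have yS : y \notin S by apply: contra yN => yS; rewrite inE yU yS.
have yC : y \notin C by apply: contra yN; apply: (subsetP sCN).
have xS : x \notin S by apply: contraL exy => xS; rewrite esym yNS.
have [s sS exs] : exists2 s, s \in S & e x s.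
  by move: xN; rewrite inE (negbTE xS) => /andP[_ /exists_inP].
have xy : x != y by apply: contraNneq yN => <-.
set C' := x |: (y |: C); set S' := y |: S.
have inC' z : z \in C -> z \in C' by move=> zC; rewrite !inE zC !orbT.
have grow_edges : subrel (cluster_edges C S) (cluster_edges C' S').
  move=> a b /and4P[eab aC bC abS]; rewrite /cluster_edges /= eab !inC' //=.
  by rewrite !inE (negbTE (memPn yC a aC)) (negbTE (memPn yC b bC)).
have cvs : connect (cluster_edges C' S') v s.
  exact: sub_connect grow_edges _ _ (conC s (subsetP sSC s sS)).
have cvx : connect (cluster_edges C' S') v x.
  apply: connect_trans cvs (connect1 _); rewrite /cluster_edges /= esym exs.
  by rewrite !inE eqxx sS (subsetP sSC s sS) (negbTE xy) (negbTE xS) !orbT.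
split.
- by apply/subsetP=> z; rewrite !inE => /orP[->|/(subsetP sSC)->]; rewrite !orbT.
- apply/subsetP=> z /setU1P[->|/setU1P[->|zC]].
  + exact: subsetP (nbhdS U (subsetUr [set y] S)) x xN.
  + by rewrite !inE yU eqxx.
  + exact: subsetP (nbhdS U (subsetUr [set y] S)) z (subsetP sCN z zC).
- by rewrite !inE vS orbT.
- move=> a b; rewrite !inE => /orP[/eqP->|aS] /orP[/eqP->|bS].
  + by rewrite eirr.
  + exact: yNS.
  + by rewrite esym yNS.
  + exact: stS.
- rewrite !cardsU1 yS yC (@leq_ltn_trans (2 + #|C|)) //.
    by rewrite addnA leq_add2r; case: (_ \notin _).
  by rewrite mulnDr ltn_add2l.
- move=> z /setU1P[->|/setU1P[->|zC]] //.
  + apply: connect_trans cvx (connect1 _).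
    by rewrite /cluster_edges /= exy !inE !eqxx (negbTE xy) (negbTE xS) !orbT.
  + exact: sub_connect grow_edges _ _ (conC z zC).
Qed.

Lemma exists_closed_cluster (U : {set T}) v : v \in U ->
  exists C S, cluster U v C S /\ nbhd_closed U S.
Proof.
move=> vU; suff grow C S : cluster U v C S ->
    exists C' S', cluster U v C' S' /\ nbhd_closed U S' by exact: grow (cluster1 vU).
have [n] := ubnP #|U :\: C|; elim: n => // n IHn in C S * => ltCn clu.
have [/exists_inP[x xN /exists_inP[y yUN exy]]|/exists_inPn closed] :=
  boolP [exists x in nbhd U S, exists y in U :\: nbhd U S, e x y].
  apply: IHn (cluster_grow clu xN yUN exy); rewrite -ltnS (leq_trans _ ltCn) //.
  rewrite ltnS; apply: proper_card; apply/properP; split.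
    by apply: setDS; apply/subsetP=> z zC; rewrite !inE zC !orbT.
  case/setDP: yUN => yU yN; exists y; last by rewrite !inE eqxx orbT.
  by rewrite inE yU andbT; apply: contra yN; apply: (subsetP (cluster_nbhd clu)).
exists C, S; split=> // x y xN yU exy; apply: contraT => yN.
by have /exists_inPn/(_ y) := closed x xN; rewrite inE yN yU exy => /(_ isT).
Qed.

Section Extension.

Variables (t : nat) (C S R : {set T}) (v : T).
Hypotheses (sSC : S \subset C) (vS : v \in S).
Hypothesis conC : {in C, forall x, connect (cluster_edges C S) v x}.
Hypothesis disRC : [disjoint R & C].
Hypothesis adjR : {in R, forall r, exists2 s, s \in S & e r s}.
Variables (SR XR : {set T}) (ER : rel T) (phiR : T -> 'I_t) (b : bool).
Hypotheses (sSR : SR \subset R) (modelR : odd_Kt_model SR ER XR phiR).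
Hypothesis sideR : forall i, exists2 x, x \in SR & phiR x = i /\ (x \in XR) = b.

Let SR_notC x : x \in SR -> x \notin C.
Proof. by move/(subsetP sSR)/(disjointFr disRC)/negbT. Qed.

Let C_notSR x : x \in C -> x \notin SR.
Proof. by apply: contraL; apply: SR_notC. Qed.

(* [C] becomes the new branch set [ord_max], joined to every old branch set by
   an edge from [S] to a vertex on side [b] of the old cut; putting [S] on that
   side of the new cut keeps these edges uncontracted. *)
Definition ext_link x y := [&& x \in SR, (x \in XR) == b, y \in S & e x y].

Definition ext_edges : rel T :=
  [rel x y | [|| ER x y, cluster_edges C S x y, ext_link x y | ext_link y x]].

Definition ext_side := S :|: [set x in SR | (x \in XR) == b].

Definition ext_label x : 'I_t.+1 :=
  if x \in C then ord_max else lift ord_max (phiR x).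

Lemma ext_edges_sym : symmetric ext_edges.
Proof.
case: modelR => _ symER _ _ _ x y.
by rewrite /ext_edges /= symER cluster_edges_sym (orbC (ext_link x y)).
Qed.

Lemma ext_edges_sub x y :
  ext_edges x y -> [/\ e x y, x \in C :|: SR & y \in C :|: SR].
Proof.
case: modelR => hER _ _ _ _; rewrite /ext_edges /=.
case/or4P=> [/hER[]|/and4P[]|/and4P[]|/and4P[]].
- by move=> exy xSR ySR; rewrite !inE xSR ySR !orbT.
- by move=> exy xC yC _; rewrite !inE xC yC.
- by move=> xSR _ yS exy; rewrite !inE xSR (subsetP sSC y yS) orbT.
- by move=> ySR _ xS eyx; rewrite !inE ySR (subsetP sSC x xS) orbT esym.
Qed.

Local Notation ext_cut := (cut_edges ext_edges ext_side).

Lemma ext_cut_edges : ext_cut =2 relU (cluster_edges C S) (cut_edges ER XR).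
Proof.
case: modelR => hER _ _ _ _ x y.
have sideSR z : z \in SR -> (z \in ext_side) = ((z \in XR) == b).
  move=> zSR; have zS : z \notin S by apply: contra (SR_notC zSR); apply: (subsetP sSC).
  by rewrite !inE zSR (negbTE zS).
have sideC z : z \in C -> (z \in ext_side) = (z \in S).
  move=> zC; have zSR : z \notin SR by apply: contraL zC; apply: SR_notC.
  by rewrite !inE (negbTE zSR) orbF.
rewrite /cut_edges /ext_edges /ext_link /cluster_edges /=.
case Exy: (ER x y) => /=.
  have [_ xSR ySR] := hER _ _ Exy.
  rewrite (negbTE (SR_notC xSR)) andbF /= !sideSR //.
  by case: (x \in XR); case: (y \in XR); case: b.
rewrite orbF; case: (boolP [&& e x y, x \in C, y \in C & _]) => [/and4P[_ xC yC xyS]|_].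
  by rewrite !sideC.
have sideS z : z \in S -> z \in ext_side by move=> zS; rewrite inE zS.
apply/negbTE/negP => /andP[/or3P[//|/and4P[aSR ab bS _]|/and4P[aSR ab bS _]]];
  by rewrite (sideSR _ aSR) (sideS _ bS) ab.
Qed.

Lemma ext_cut_closedC : closed ext_cut C.
Proof.
case: modelR => hER _ _ _ _ x y.
rewrite ext_cut_edges => /orP[/and4P[_ -> -> _]|/andP[/hER[_ xSR ySR] _]] //.
by rewrite (negbTE (SR_notC xSR)) (negbTE (SR_notC ySR)).
Qed.

Lemma ext_cut_connectC : {in C &, forall x y, connect ext_cut x y}.
Proof.
move=> x y xC yC.
have sub : subrel (cluster_edges C S) ext_cut.
  by move=> u w h; rewrite ext_cut_edges /= h.
apply: sub_connect sub _ _ _.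
rewrite (connect_trans _ (conC yC)) // (sym_connect_sym (cluster_edges_sym C S)).
exact: conC.
Qed.

Lemma ext_cut_connectSR :
  {in SR &, forall x y, connect ext_cut x y = connect (cut_edges ER XR) x y}.
Proof.
case: modelR => hER _ _ _ _ x y xSR _; apply/idP/idP; last first.
  by apply: sub_connect => u w h; rewrite ext_cut_edges /= h orbT.
apply: connect_restrict xSR => [u w|u w uSR]; rewrite ext_cut_edges.
  case/orP=> [/and4P[_ uC wC _]|/andP[/hER[_ -> ->] _]] //.
  by rewrite (negbTE (C_notSR uC)) (negbTE (C_notSR wC)).
by case/orP=> [/and4P[_ uC _ _]|//]; case/negP: (SR_notC uSR).
Qed.

Lemma ext_label_connect :
  {in C :|: SR &, forall x y, (ext_label x == ext_label y) = connect ext_cut x y}.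
Proof.
case: modelR => _ _ hphi _ _ x y; rewrite !inE /ext_label.
case: (boolP (x \in C)) => xC; case: (boolP (y \in C)) => yC //= xSR ySR.
- by rewrite eqxx ext_cut_connectC.
- rewrite (negbTE (neq_lift _ _)); symmetry; apply/negbTE/negP.
  by move/(closed_connect ext_cut_closedC); rewrite xC (negbTE yC).
- rewrite eq_sym (negbTE (neq_lift _ _)); symmetry; apply/negbTE/negP.
  by move/(closed_connect ext_cut_closedC); rewrite yC (negbTE xC).
- by rewrite (inj_eq lift_inj) hphi // ext_cut_connectSR.
Qed.

Lemma ext_label_adjacent (i j : 'I_t.+1) : i != j ->
  exists x y, [/\ ext_edges x y, ext_label x = i & ext_label y = j].
Proof.
case: modelR => hER _ _ _ hadj.
have labelSR x : x \in SR -> ext_label x = lift ord_max (phiR x).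
  by move=> xSR; rewrite /ext_label (negbTE (SR_notC xSR)).
have labelS x : x \in S -> ext_label x = ord_max.
  by move=> xS; rewrite /ext_label (subsetP sSC x xS).
have link_max a : exists x y,
    [/\ ext_edges x y, ext_label x = lift ord_max a & ext_label y = ord_max].
  have [x xSR [pxa xb]] := sideR a; have [s sS exs] := adjR (subsetP sSR x xSR).
  exists x, s; split; [|by rewrite labelSR ?pxa|exact: labelS].
  by rewrite /ext_edges /ext_link /= xSR xb eqxx sS exs !orbT.
case: (unliftP ord_max i) => [a ->|->]; case: (unliftP ord_max j) => [c ->|->] //;
  rewrite ?eqxx // => neq.
- have ac : a != c by apply: contraNneq neq => ->.
  have [x [y [Exy pxa pyc]]] := hadj a c ac.
  have [_ xSR ySR] := hER _ _ Exy.
  by exists x, y; split; rewrite ?labelSR ?pxa ?pyc //= /ext_edges /= Exy.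
- have [x [y [Exy lx ly]]] := link_max c.
  by exists y, x; split; rewrite // ext_edges_sym.
Qed.

Lemma odd_minor_in_ext : odd_minor_in (C :|: R) t.+1.
Proof.
case: modelR => _ _ _ honto _.
exists (C :|: SR), ext_edges, ext_side, ext_label; split; first exact: setUS.
split.
- exact: ext_edges_sub.
- exact: ext_edges_sym.
- exact: ext_label_connect.
- move=> i; case: (unliftP ord_max i) => [j ->|->].
    have [x xSR pxj] := honto j; exists x; first by rewrite inE xSR orbT.
    by rewrite /ext_label (negbTE (SR_notC xSR)) pxj.
  have vC := subsetP sSC v vS.
  by exists v; rewrite /ext_label ?inE vC.
- exact: ext_label_adjacent.
Qed.

End Extension.

Lemma odd_minor_in_extend t (C S R : {set T}) v : S \subset C -> v \in S ->
  {in C, forall x, connect (cluster_edges C S) v x} -> [disjoint R & C] ->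
  {in R, forall r, exists2 s, s \in S & e r s} ->
  odd_minor_in R t -> odd_minor_in (C :|: R) t.+1.
Proof.
move=> sSC vS conC disRC adjR [SR [ER [XR [phiR [sSR modelR]]]]].
have [b sideR] := odd_Kt_model_side modelR.
exact: (odd_minor_in_ext sSC vS conC disRC adjR sSR modelR sideR).
Qed.

Definition large_stable t (U : {set T}) :=
  exists I : {set T}, [/\ I \subset U, stable I & #|U| <= 2 * t * #|I|].

Lemma large_stable0 t : large_stable t set0.
Proof. by exists set0; split; rewrite ?sub0set ?cards0 // => x; rewrite inE. Qed.

Lemma large_stable_split t (U K : {set T}) : K \subset U ->
  (forall x y, x \in K -> y \in U :\: K -> ~~ e x y) ->
  large_stable t K -> large_stable t (U :\: K) -> large_stable t U.
Proof.
move=> sKU sep [A [sAK stA cA]] [B [sBU stB cB]].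
have AB0 : A :&: B = set0.
  apply/setP=> z; rewrite !inE; apply/negbTE/andP=> [[/(subsetP sAK) zK]].
  by move/(subsetP sBU); rewrite inE zK.
exists (A :|: B); split.
- by rewrite subUset (subset_trans sAK sKU) (subset_trans sBU (subsetDl U K)).
- move=> x y /setUP[xA|xB] /setUP[yA|yB].
  + exact: stA.
  + exact: sep (subsetP sAK x xA) (subsetP sBU y yB).
  + by rewrite esym; exact: sep (subsetP sAK y yA) (subsetP sBU x xB).
  + exact: stB.
- rewrite cardsU AB0 cards0 subn0 mulnDr.
  by rewrite -(cardsID K U) (setIidPr sKU) leq_add.
Qed.

Lemma large_stable_nbhd t (U : {set T}) v C S :
  (forall R, ~ odd_minor_in R t -> large_stable t R) ->
  ~ odd_minor_in U t.+1 -> cluster U v C S -> large_stable t.+1 (nbhd U S).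
Proof.
move=> IHt noU [sSC sCN vS stS cardCS conC].
set K := nbhd U S; set R := K :\: C.
have noR : ~ odd_minor_in R t.
  move=> /(odd_minor_in_extend sSC vS conC) minor; apply: noU.
  apply: odd_minor_in_subset (minor _ _).
  - by rewrite subUset !(subset_trans _ (nbhd_sub U S)) ?subsetDl.
  - by rewrite disjoint_subset; apply/subsetP=> z; rewrite !inE => /andP[].
  - move=> r; rewrite !inE => /andP[rC /andP[_ /orP[rS|/exists_inP//]]].
    by case/negP: rC; apply: (subsetP sSC).
have [IR [sIR stIR cIR]] := IHt R noR.
have cK : #|K| = #|C| + #|R| by rewrite -(cardsID C K) (setIidPr sCN).
have [hK|hK] := leqP #|K| (2 * t.+1 * #|S|).
  by exists S; split=> //; apply: subset_trans sSC sCN.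
exists IR; split=> //; first exact: subset_trans sIR (subsetDl K C).
move: cardCS cIR hK; rewrite cK; nia.
Qed.

Lemma large_stable_of_no_odd_minor t (U : {set T}) :
  0 < t -> ~ odd_minor_in U t -> large_stable t U.
Proof.
elim: t U => [//|t IHt] U _; case: t IHt => [_|t IHt] noU.
  suff -> : U = set0 by exact: large_stable0.
  by apply/setP=> v; rewrite inE; apply/negP => /odd_minor_in1.
have [n] := ubnP #|U|; elim: n => // n IHn in U noU *; move=> ltUn.
have [->|[v vU]] := set_0Vmem U; first exact: large_stable0.
have [C [S [clu closed]]] := exists_closed_cluster vU.
have vK : v \in nbhd U S.
  exact/(subsetP (cluster_nbhd clu))/(subsetP (cluster_sub clu))/(cluster_root clu).
apply: (large_stable_split (nbhd_sub U S)).
- by move=> x y xK /setDP[yU yK]; apply: contra yK; apply: closed.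
- exact: large_stable_nbhd (fun R => IHt R isT) noU clu.
- apply: IHn; first by move/(odd_minor_in_subset (subsetDl U _)).
  rewrite -ltnS (leq_trans _ ltUn) // ltnS; apply: proper_card; apply/properP.
  by split; [apply: subsetDl | exists v; rewrite ?in_setD ?vK].
Qed.

Definition colorable_on (U : {set T}) k := exists c : T -> nat,
  {in U, forall x, c x < k} /\ {in U &, forall x y, e x y -> c x != c y}.

Lemma colorable_on_stableU (U I : {set T}) k :
  stable I -> colorable_on (U :\: I) k -> colorable_on U k.+1.
Proof.
move=> stI [c [ck cP]]; exists (fun x => if x \in I then k else c x); split.
  by move=> x xU; case: ifPn => xI //; rewrite ltnS ltnW // ck // inE xI.
move=> x y xU yU exy; case: ifPn => xI; case: ifPn => yI.
- by case/negP: (stI x y xI yI).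
- by rewrite eq_sym neq_ltn ck // inE yI.
- by rewrite neq_ltn ck // inE xI.
- by apply: cP; rewrite // inE ?xI ?yI.
Qed.

Lemma colorable_on_setT k : colorable_on setT k -> colorable e k.
Proof.
case=> c [ck cP]; apply/existsP; exists [ffun x => Ordinal (ck x (in_setT x))].
apply/forallP=> x; apply/forallP=> y; apply/implyP=> exy.
by rewrite !ffunE -val_eqE /=; apply: cP; rewrite ?in_setT.
Qed.

Lemma chromatic_number_le k : colorable e k -> k <= #|T| -> chromatic_number e <= k.
Proof.
move=> ck; rewrite -ltnS => kT; rewrite /chromatic_number -minEnat.
have Pk : colorable e (Ordinal kT) := ck.
exact: (Order.TotalTheory.bigmin_le_cond _ (fun i : 'I_#|T|.+1 => val i) Pk).
Qed.

Lemma colorable_on_log_bound t : 0 < t -> (forall U, large_stable t U) ->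
  forall U, exists k, [/\ colorable_on U k, k <= #|U|
    & t <= #|U| -> (INR k <= log_bound t #|U|)%R].
Proof.
move=> t0 stable_t U; have [n] := ubnP #|U|; elim: n => // n IHn in U *; move=> ltUn.
have [->|[v vU]] := set_0Vmem U.
  exists 0; split=> //; first by exists (fun=> 0); split=> x; rewrite inE.
  by rewrite cards0 leqNgt t0.
have [I [sIU stI cI]] := stable_t U.
have cU : #|U| = #|U :\: I| + #|I| by rewrite addnC -(cardsID I U) (setIidPr sIU).
have I0 : 0 < #|I|.
  rewrite lt0n; apply: contraTneq cI => ->; rewrite muln0 -ltnNge.
  by apply/card_gt0P; exists v.
have [|k [colk kU hk]] := IHn (U :\: I).
  by rewrite -ltnS (leq_trans _ ltUn) // ltnS cU -addn1 leq_add2l.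
exists k.+1; split; first exact: colorable_on_stableU stI colk.
  by rewrite cU -addn1 leq_add.
by rewrite cU in cI *; apply: log_bound_succ.
Qed.

End OddMinorFree.

Theorem corollary2p5 (T : finType) (e : rel T) (t : nat) :
  symmetric e -> irreflexive e ->
  (0 < t)%N -> (t <= #|T|)%N ->
  ~ has_odd_Kt_minor e t ->
  (INR (chromatic_number e) <=
     2 * INR t * (1 + ln (INR #|T| / INR t)))%R.
Proof.
move=> esym eirr t0 tT noKt.
have stable_t U : large_stable e t U.
  by apply: (large_stable_of_no_odd_minor esym eirr t0) => /has_odd_Kt_minor_in.
have [k [colk kT hk]] := colorable_on_log_bound t0 stable_t [set: T].
rewrite cardsT in kT hk; apply: Rle_trans (hk tT); apply/le_INR/leP.
exact: chromatic_number_le (colorable_on_setT colk) kT.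
Qed.
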